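(* Let $M^2$ be a surface in $\mathbb{R}^4$ free of flat points. Then $M^2$ has flat normal connection (the curvature of its normal connection vanishes identically) if and only if at each point of $M^2$ the tangent indicatrix $\chi$ is a rectangular hyperbola (a Lorentz circle), i.e. the principal normal curvatures satisfy $\nu''=-\nu'\neq 0$.
   Context: Let $M^2: z=z(u,v)$ be a regular surface in $\mathbb{R}^4$ with first fundamental form $I=E\,du^2+2F\,du\,dv+G\,dv^2$, $W=\sqrt{EG-F^2}$. Choose an orthonormal normal frame $\{e_1,e_2\}$ with $\{z_u,z_v,e_1,e_2\}$ positively oriented, write $\sigma(z_u,z_u)=c_{11}^1e_1+c_{11}^2e_2$, $\sigma(z_u,z_v)=c_{12}^1e_1+c_{12}^2e_2$, $\sigma(z_v,z_v)=c_{22}^1e_1+c_{22}^2e_2$ ($\sigma$ the second fundamental form), and set $L=\frac{2}{W}(c_{11}^1c_{12}^2-c_{12}^1c_{11}^2)$, $M=\frac{1}{W}(c_{11}^1c_{22}^2-c_{22}^1c_{11}^2)$, $N=\frac{2}{W}(c_{12}^1c_{22}^2-c_{22}^1c_{12}^2)$. A point is flat if $L=M=N=0$; ''free of flat points'' means $(L,M,N)\ne(0,0,0)$ everywhere. At each point, the principal normal curvatures $\nu',\nu''$ are the two roots of $(EG-F^2)\nu^2-(EN+GL-2FM)\nu+(LN-M^2)=0$ (the eigenvalues of $II=L\lambda^2+2M\lambda\mu+N\mu^2$ relative to $I$), with corresponding $I$-orthogonal principal directions. The tangent indicatrix $\chi$ at $p$ is the conic in $T_pM^2$ given, in Cartesian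 coordinates $(X,Y)$ with respect to an orthonormal basis of principal directions, by $\nu'X^2+\nu''Y^2=\varepsilon$, $\varepsilon=\pm1$. *)

From Stdlib Require Import Reals List.
From Coquelicot Require Import Coquelicot.
Open Scope R_scope.

(** Vectors of R^4: only the components 0,1,2,3 are ever used. *)
Definition V4 := nat -> R.

Definition dot (a b : V4) : R := a 0%nat * b 0%nat + a 1%nat * b 1%nat
  + a 2%nat * b 2%nat + a 3%nat * b 3%nat.

Definition m2 (a b : V4) (i j : nat) : R := a i * b j - a j * b i.

(** det of the 4x4 matrix with columns a b c d (Laplace expansion along the
    first two columns). *)
Definition det4 (a b c d : V4) : R :=
    m2 a b 0 1 * m2 c d 2 3 - m2 a b 0 2 * m2 c d 1 3
  + m2 a b 0 3 * m2 c d 1 2 + m2 a b 1 2 * m2 c d 0 3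
  - m2 a b 1 3 * m2 c d 0 2 + m2 a b 2 3 * m2 c d 0 1.

Definition pu (f : R -> R -> R) : R -> R -> R :=
  fun u v => Derive (fun t => f t v) u.
Definition pv (f : R -> R -> R) : R -> R -> R :=
  fun u v => Derive (fun t => f u t) v.

Definition Pu (z : R -> R -> V4) : R -> R -> V4 :=
  fun u v i => pu (fun a b => z a b i) u v.
Definition Pv (z : R -> R -> V4) : R -> R -> V4 :=
  fun u v i => pv (fun a b => z a b i) u v.

Fixpoint dpart (l : list bool) (f : R -> R -> R) : R -> R -> R :=
  match l with
  | nil => f
  | b :: l' => if b then pu (dpart l' f) else pv (dpart l' f)
  end.

Definition smooth (D : R -> R -> Prop) (f : R -> R -> R) : Prop :=
  forall (l : list bool) (u v : R), D u v ->
    ex_derive (fun t => dpart l f t v) u /\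
    ex_derive (fun t => dpart l f u t) v /\
    continuous (fun p : R * R => dpart l f (fst p) (snd p)) (u, v).

Definition smoothV (D : R -> R -> Prop) (z : R -> R -> V4) : Prop :=
  forall i : nat, (i < 4)%nat -> smooth D (fun u v => z u v i).

Definition open_dom (D : R -> R -> Prop) : Prop :=
  open (fun p : R * R => D (fst p) (snd p)).

Definition EE z u v := dot (Pu z u v) (Pu z u v).
Definition FF z u v := dot (Pu z u v) (Pv z u v).
Definition GG z u v := dot (Pv z u v) (Pv z u v).
Definition WW z u v := sqrt (EE z u v * GG z u v - FF z u v ^ 2).

Definition regular (D : R -> R -> Prop) (z : R -> R -> V4) : Prop :=
  forall u v, D u v -> EE z u v * GG z u v - FF z u v ^ 2 > 0.

Definition normal_frame (D : R -> R -> Prop) (z e1 e2 : R -> R -> V4) : Prop :=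
  forall u v, D u v ->
    dot (e1 u v) (e1 u v) = 1 /\ dot (e2 u v) (e2 u v) = 1 /\
    dot (e1 u v) (e2 u v) = 0 /\
    dot (e1 u v) (Pu z u v) = 0 /\ dot (e1 u v) (Pv z u v) = 0 /\
    dot (e2 u v) (Pu z u v) = 0 /\ dot (e2 u v) (Pv z u v) = 0 /\
    det4 (Pu z u v) (Pv z u v) (e1 u v) (e2 u v) > 0.

(** Coefficients of the second fundamental form:
    sigma(z_u,z_u) = c11^1 e1 + c11^2 e2, etc.  (c^k_ij = <z_ij, e_k>). *)
Definition c11 z (e : R -> R -> V4) u v := dot (Pu (Pu z) u v) (e u v).
Definition c12 z (e : R -> R -> V4) u v := dot (Pv (Pu z) u v) (e u v).
Definition c22 z (e : R -> R -> V4) u v := dot (Pv (Pv z) u v) (e u v).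

Definition LL z e1 e2 u v :=
  2 / WW z u v * (c11 z e1 u v * c12 z e2 u v - c12 z e1 u v * c11 z e2 u v).
Definition MM z e1 e2 u v :=
  1 / WW z u v * (c11 z e1 u v * c22 z e2 u v - c22 z e1 u v * c11 z e2 u v).
Definition NN z e1 e2 u v :=
  2 / WW z u v * (c12 z e1 u v * c22 z e2 u v - c22 z e1 u v * c12 z e2 u v).

Definition free_of_flat_points (D : R -> R -> Prop) (z e1 e2 : R -> R -> V4)
  : Prop :=
  forall u v, D u v ->
    ~ (LL z e1 e2 u v = 0 /\ MM z e1 e2 u v = 0 /\ NN z e1 e2 u v = 0).

Definition principal_normal_curvatures (z e1 e2 : R -> R -> V4) (u v nu1 nu2 : R)
  : Prop :=
  let E := EE z u v in let F := FF z u v in let G := GG z u v in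
  let L := LL z e1 e2 u v in let M := MM z e1 e2 u v in
  let N := NN z e1 e2 u v in
  forall nu : R,
    (E * G - F ^ 2) * nu ^ 2 - (E * N + G * L - 2 * F * M) * nu
      + (L * N - M ^ 2)
    = (E * G - F ^ 2) * (nu - nu1) * (nu - nu2).

(** Tangent indicatrix nu' X^2 + nu'' Y^2 = eps is a rectangular hyperbola
    (Lorentz circle): nu'' = - nu' <> 0. *)
Definition indicatrix_rectangular_hyperbola (z e1 e2 : R -> R -> V4) (u v : R)
  : Prop :=
  exists nu1 nu2 : R, principal_normal_curvatures z e1 e2 u v nu1 nu2 /\
    nu2 = - nu1 /\ nu1 <> 0.

(** Normal connection D^perp e1 = omega e2, D^perp e2 = - omega e1 with
    connection form omega(X) = <d_X e1, e2>.  Its curvature is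
    R^perp(z_u,z_v) e1 = (d_u omega(d_v) - d_v omega(d_u)) e2 ;
    flat normal connection means this vanishes identically. *)
Definition omega_u (e1 e2 : R -> R -> V4) u v := dot (Pu e1 u v) (e2 u v).
Definition omega_v (e1 e2 : R -> R -> V4) u v := dot (Pv e1 u v) (e2 u v).

Definition flat_normal_connection (D : R -> R -> Prop) (e1 e2 : R -> R -> V4)
  : Prop :=
  forall u v, D u v -> pu (omega_v e1 e2) u v - pv (omega_u e1 e2) u v = 0.

From Stdlib Require Import Reals Lra Lia List.
From Coquelicot Require Import Coquelicot.
Open Scope R_scope.

(* Differentiating the relations satisfied by the frame {z_u, z_v, e1, e2}
   (Weingarten equations) gives the Ricci equation: the curvature of the normal
   connection is -(EN + GL - 2FM)/(2W), a negative multiple of the trace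
   nu' + nu'' of II relative to I.  So the normal connection is flat exactly
   when nu'' = -nu'.  In that case nu' <> 0 because a traceless II that does
   not vanish is indefinite: LN - M^2 < 0, hence nu' nu'' < 0. *)

Lemma dot_comm (a b : V4) : dot a b = dot b a.
Proof. unfold dot; ring. Qed.

Lemma dot_eq_l (a b c : V4) : (forall i, (i < 4)%nat -> a i = b i) -> dot a c = dot b c.
Proof. intros Hab; unfold dot; rewrite !Hab by lia; reflexivity. Qed.

Lemma dot_self_nonneg (a : V4) : 0 <= dot a a.
Proof. unfold dot; nra. Qed.

Definition set_coord (a : V4) (k : nat) (r : R) : V4 :=
  fun i => if Nat.eqb i k then r else a i.

(* Cramer's rule: replacing row [k] of the matrix with columns [a b c d] by
   the inner products with [x] multiplies the determinant by [x k]. *)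
Lemma det4_set_coord_dot (a b c d x : V4) (k : nat) : (k < 4)%nat ->
  det4 (set_coord a k (dot a x)) (set_coord b k (dot b x))
       (set_coord c k (dot c x)) (set_coord d k (dot d x)) = det4 a b c d * x k.
Proof.
  intros Hk; destruct k as [|[|[|[|k]]]]; try lia;
    unfold det4, m2, set_coord, dot; simpl; ring.
Qed.

Lemma det4_set_coord0 (a b c d : V4) (k : nat) : (k < 4)%nat ->
  det4 (set_coord a k 0) (set_coord b k 0) (set_coord c k 0) (set_coord d k 0) = 0.
Proof.
  intros Hk; destruct k as [|[|[|[|k]]]]; try lia;
    unfold det4, m2, set_coord; simpl; ring.
Qed.

Lemma orthogonal_basis_eq0 (a b c d x : V4) (k : nat) : (k < 4)%nat ->
  det4 a b c d <> 0 ->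
  dot a x = 0 -> dot b x = 0 -> dot c x = 0 -> dot d x = 0 -> x k = 0.
Proof.
  intros Hk Hdet Ha Hb Hc Hd.
  assert (Hprod : det4 a b c d * x k = 0).
  { rewrite <- det4_set_coord_dot, Ha, Hb, Hc, Hd by exact Hk.
    exact (det4_set_coord0 a b c d k Hk). }
  destruct (Rmult_integral _ _ Hprod); [contradiction | assumption].
Qed.

Definition adapted_frame (Zu Zv N1 N2 : V4) : Prop :=
  dot N1 N1 = 1 /\ dot N2 N2 = 1 /\ dot N1 N2 = 0 /\
  dot N1 Zu = 0 /\ dot N1 Zv = 0 /\ dot N2 Zu = 0 /\ dot N2 Zv = 0 /\
  det4 Zu Zv N1 N2 > 0.

Lemma adapted_frame_dot (Zu Zv N1 N2 a b : V4) :
  adapted_frame Zu Zv N1 N2 ->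
  dot Zu Zu * dot Zv Zv - dot Zu Zv ^ 2 <> 0 ->
  dot a b =
    (dot Zv Zv * dot a Zu * dot b Zu
     - dot Zu Zv * (dot a Zu * dot b Zv + dot a Zv * dot b Zu)
     + dot Zu Zu * dot a Zv * dot b Zv) / (dot Zu Zu * dot Zv Zv - dot Zu Zv ^ 2)
    + dot a N1 * dot b N1 + dot a N2 * dot b N2.
Proof.
  intros (H11 & H22 & H12 & H1u & H1v & H2u & H2v & Hdet) Hgram.
  set (E := dot Zu Zu) in *; set (F := dot Zu Zv) in *; set (G := dot Zv Zv) in *.
  set (al := (G * dot a Zu - F * dot a Zv) / (E * G - F ^ 2)).
  set (be := (E * dot a Zv - F * dot a Zu) / (E * G - F ^ 2)).
  set (x := fun i => a i - al * Zu i - be * Zv i - dot a N1 * N1 i - dot a N2 * N2 i).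
  assert (Hx : forall w, dot x w =
    dot a w - al * dot Zu w - be * dot Zv w - dot a N1 * dot N1 w - dot a N2 * dot N2 w)
    by (intro w; unfold x, dot; ring).
  assert (Hvu : dot Zv Zu = F) by apply dot_comm.
  assert (Hxu : dot Zu x = 0).
  { rewrite dot_comm, Hx, H1u, H2u, Hvu; unfold al, be, E, F, G in *; field; exact Hgram. }
  assert (Hxv : dot Zv x = 0).
  { rewrite dot_comm, Hx, H1v, H2v; unfold al, be, E, F, G in *; field; exact Hgram. }
  assert (Hx1 : dot N1 x = 0).
  { rewrite dot_comm, Hx, H11, (dot_comm Zu), (dot_comm Zv), H1u, H1v,
      (dot_comm N2), H12; ring. }
  assert (Hx2 : dot N2 x = 0).
  { rewrite dot_comm, Hx, H22, (dot_comm Zu), (dot_comm Zv), H2u, H2v, H12; ring. }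
  assert (Hx0 : forall k, (k < 4)%nat -> x k = 0).
  { intros k Hk; apply (orthogonal_basis_eq0 Zu Zv N1 N2); auto; lra. }
  assert (Hxb : dot x b = 0).
  { unfold dot; rewrite !Hx0 by lia; ring. }
  transitivity (dot x b + al * dot Zu b + be * dot Zv b
                + dot a N1 * dot N1 b + dot a N2 * dot N2 b).
  { unfold x, dot; ring. }
  rewrite Hxb, (dot_comm Zu b), (dot_comm Zv b), (dot_comm N1 b), (dot_comm N2 b).
  unfold al, be, E, F, G in *; field; exact Hgram.
Qed.

Lemma quadratic_opposite_roots (a b c : R) : 0 < a ->
  (exists r1 r2 : R, (forall x, a * x ^ 2 - b * x + c = a * (x - r1) * (x - r2)) /\
     r2 = - r1 /\ r1 <> 0) <-> b = 0 /\ c < 0.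
Proof.
  intros Ha; split.
  - intros (r1 & r2 & Hfact & -> & Hr1).
    pose proof (Hfact 1) as H1; pose proof (Hfact (-1)) as Hm1; pose proof (Hfact 0) as H0.
    assert (Hsq : 0 < r1 * r1) by (destruct (Rlt_or_le 0 r1); nra).
    split; nra.
  - intros [-> Hc].
    assert (Hq : 0 < - c / a) by (apply Rdiv_lt_0_compat; lra).
    exists (sqrt (- c / a)), (- sqrt (- c / a)); split; [|split].
    + intros x; pose proof (sqrt_sqrt _ (Rlt_le _ _ Hq)) as Hs.
      set (r := sqrt _) in *.
      replace (a * (x - r) * (x - - r)) with (a * x ^ 2 - a * (r * r)) by ring.
      rewrite Hs; field; lra.
    + reflexivity.
    + apply Rgt_not_eq, sqrt_lt_R0, Hq.
Qed.

(* A nonzero form [II] that is traceless with respect to a positive definite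
   [I] is indefinite. *)
Lemma trace_zero_det_neg (E F G L M N : R) :
  0 < E -> 0 < E * G - F ^ 2 -> ~ (L = 0 /\ M = 0 /\ N = 0) ->
  E * N + G * L - 2 * F * M = 0 -> L * N - M ^ 2 < 0.
Proof.
  intros HE Hgram Hnz Htr.
  assert (Hid : E ^ 2 * (L * N - M ^ 2) = - ((E * M - F * L) ^ 2 + (E * G - F ^ 2) * L ^ 2)).
  { transitivity (E * L * (E * N + G * L - 2 * F * M)
                  - ((E * M - F * L) ^ 2 + (E * G - F ^ 2) * L ^ 2)); [ring|].
    rewrite Htr; ring. }
  assert (Hpos : 0 < (E * M - F * L) ^ 2 + (E * G - F ^ 2) * L ^ 2).
  { destruct (Req_dec L 0) as [HL|HL].
    - subst L; destruct (Req_dec M 0) as [HM|HM].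
      + exfalso; apply Hnz; subst M; repeat split.
        assert (HEN : E * N = 0) by lra.
        destruct (Rmult_integral _ _ HEN); lra.
      + assert (0 < (E * M) ^ 2) by (apply pow2_gt_0; apply Rmult_integral_contrapositive; lra).
        nra.
    - assert (0 < (E * G - F ^ 2) * L ^ 2)
        by (apply Rmult_lt_0_compat; [exact Hgram | apply pow2_gt_0; exact HL]).
      pose proof (pow2_ge_0 (E * M - F * L)); lra. }
  nra.
Qed.

Lemma is_derive_Rplus (f g : R -> R) (x df dg : R) :
  is_derive f x df -> is_derive g x dg -> is_derive (fun t => f t + g t) x (df + dg).
Proof. exact (is_derive_plus f g x df dg). Qed.

Lemma is_derive_dot (f g : R -> V4) (x : R) (df dg : V4) :
  (forall i, (i < 4)%nat -> is_derive (fun t => f t i) x (df i)) ->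
  (forall i, (i < 4)%nat -> is_derive (fun t => g t i) x (dg i)) ->
  is_derive (fun t => dot (f t) (g t)) x (dot df (g x) + dot (f x) dg).
Proof.
  intros Hf Hg.
  assert (Hmul : forall i, (i < 4)%nat ->
    is_derive (fun t => f t i * g t i) x (df i * g x i + f x i * dg i)).
  { intros i Hi; apply (is_derive_mult (fun t => f t i) (fun t => g t i)); auto.
    exact Rmult_comm. }
  replace (dot df (g x) + dot (f x) dg) with
    ((df 0%nat * g x 0%nat + f x 0%nat * dg 0%nat)
     + (df 1%nat * g x 1%nat + f x 1%nat * dg 1%nat)
     + (df 2%nat * g x 2%nat + f x 2%nat * dg 2%nat)
     + (df 3%nat * g x 3%nat + f x 3%nat * dg 3%nat)) by (unfold dot; ring).
  unfold dot.
  apply is_derive_Rplus; [apply is_derive_Rplus; [apply is_derive_Rplus|]|];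
    apply Hmul; lia.
Qed.

Lemma dpart_app (l m : list bool) (f : R -> R -> R) :
  dpart l (dpart m f) = dpart (l ++ m) f.
Proof. induction l as [|[|] l IH]; simpl; rewrite ?IH; reflexivity. Qed.

Lemma smoothV_Pu (D : R -> R -> Prop) (z : R -> R -> V4) :
  smoothV D z -> smoothV D (Pu z).
Proof.
  intros Hz i Hi; change (smooth D (dpart (true :: nil) (fun u v => z u v i))).
  intros l u v H; rewrite dpart_app; exact (Hz i Hi _ u v H).
Qed.

Lemma smoothV_Pv (D : R -> R -> Prop) (z : R -> R -> V4) :
  smoothV D z -> smoothV D (Pv z).
Proof.
  intros Hz i Hi; change (smooth D (dpart (false :: nil) (fun u v => z u v i))).
  intros l u v H; rewrite dpart_app; exact (Hz i Hi _ u v H).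
Qed.

Lemma pu_dot (D : R -> R -> Prop) (a b : R -> R -> V4) (u v : R) :
  smoothV D a -> smoothV D b -> D u v ->
  pu (fun x y => dot (a x y) (b x y)) u v = dot (Pu a u v) (b u v) + dot (a u v) (Pu b u v).
Proof.
  intros Ha Hb H; apply is_derive_unique,
    (is_derive_dot (fun t => a t v) (fun t => b t v)); intros i Hi; apply Derive_correct.
  - exact (proj1 (Ha i Hi nil u v H)).
  - exact (proj1 (Hb i Hi nil u v H)).
Qed.

Lemma pv_dot (D : R -> R -> Prop) (a b : R -> R -> V4) (u v : R) :
  smoothV D a -> smoothV D b -> D u v ->
  pv (fun x y => dot (a x y) (b x y)) u v = dot (Pv a u v) (b u v) + dot (a u v) (Pv b u v).
Proof.
  intros Ha Hb H; apply is_derive_unique,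
    (is_derive_dot (fun t => a u t) (fun t => b u t)); intros i Hi; apply Derive_correct.
  - exact (proj1 (proj2 (Ha i Hi nil u v H))).
  - exact (proj1 (proj2 (Hb i Hi nil u v H))).
Qed.

Lemma open_dom_locally_2d (D : R -> R -> Prop) (u v : R) :
  open_dom D -> D u v -> locally_2d D u v.
Proof.
  intros HD H; destruct (HD (u, v) H) as [eps Heps]; exists eps.
  intros a b Ha Hb; apply (Heps (a, b)); split; assumption.
Qed.

Lemma pu_locally_const (D : R -> R -> Prop) (f : R -> R -> R) (c u v : R) :
  open_dom D -> D u v -> (forall x y, D x y -> f x y = c) -> pu f u v = 0.
Proof.
  intros HD H Hf; unfold pu; rewrite (Derive_ext_loc _ (fun _ => c)).
  - apply Derive_const.
  - destruct (open_dom_locally_2d D u v HD H) as [d Hd]; exists d; intros t Ht.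
    apply Hf, Hd; [exact Ht | rewrite Rminus_eq_0, Rabs_R0; apply cond_pos].
Qed.

Lemma pv_locally_const (D : R -> R -> Prop) (f : R -> R -> R) (c u v : R) :
  open_dom D -> D u v -> (forall x y, D x y -> f x y = c) -> pv f u v = 0.
Proof.
  intros HD H Hf; unfold pv; rewrite (Derive_ext_loc _ (fun _ => c)).
  - apply Derive_const.
  - destruct (open_dom_locally_2d D u v HD H) as [d Hd]; exists d; intros t Ht.
    apply Hf, Hd; [rewrite Rminus_eq_0, Rabs_R0; apply cond_pos | exact Ht].
Qed.

Lemma pu_pv_comm (D : R -> R -> Prop) (f : R -> R -> R) (u v : R) :
  open_dom D -> smooth D f -> D u v -> pu (pv f) u v = pv (pu f) u v.
Proof.
  intros HD Hf H; apply Schwarz.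
  - destruct (open_dom_locally_2d D u v HD H) as [d Hd]; exists d; intros a b Ha Hb.
    specialize (Hd a b Ha Hb).
    destruct (Hf nil a b Hd) as (Hu & Hv & _).
    destruct (Hf (false :: nil) a b Hd) as (Hvu & _).
    destruct (Hf (true :: nil) a b Hd) as (_ & Huv & _).
    tauto.
  - apply continuity_2d_pt_filterlim, (Hf (true :: false :: nil) u v H).
  - apply continuity_2d_pt_filterlim, (Hf (false :: true :: nil) u v H).
Qed.


Lemma pu_dot_const (D : R -> R -> Prop) (a b : R -> R -> V4) (c u v : R) :
  open_dom D -> smoothV D a -> smoothV D b ->
  (forall x y, D x y -> dot (a x y) (b x y) = c) -> D u v ->
  dot (Pu a u v) (b u v) + dot (a u v) (Pu b u v) = 0.
Proof.
  intros HD Ha Hb Hc H; rewrite <- (pu_dot D) by assumption.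
  exact (pu_locally_const D _ c u v HD H Hc).
Qed.

Lemma pv_dot_const (D : R -> R -> Prop) (a b : R -> R -> V4) (c u v : R) :
  open_dom D -> smoothV D a -> smoothV D b ->
  (forall x y, D x y -> dot (a x y) (b x y) = c) -> D u v ->
  dot (Pv a u v) (b u v) + dot (a u v) (Pv b u v) = 0.
Proof.
  intros HD Ha Hb Hc H; rewrite <- (pv_dot D) by assumption.
  exact (pv_locally_const D _ c u v HD H Hc).
Qed.

Lemma dot_Pu_Pv_comm (D : R -> R -> Prop) (z : R -> R -> V4) (w : V4) (u v : R) :
  open_dom D -> smoothV D z -> D u v ->
  dot (Pu (Pv z) u v) w = dot (Pv (Pu z) u v) w.
Proof.
  intros HD Hz H; apply dot_eq_l; intros i Hi.
  exact (pu_pv_comm D (fun a b => z a b i) u v HD (Hz i Hi) H).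
Qed.

Definition unit_field (D : R -> R -> Prop) (e : R -> R -> V4) : Prop :=
  forall x y, D x y -> dot (e x y) (e x y) = 1.

Definition normal_field (D : R -> R -> Prop) (z e : R -> R -> V4) : Prop :=
  forall x y, D x y -> dot (e x y) (Pu z x y) = 0 /\ dot (e x y) (Pv z x y) = 0.

Section Surface.

Variables (D : R -> R -> Prop) (z : R -> R -> V4).
Hypotheses (HD : open_dom D) (Hz : smoothV D z).

Section UnitField.

Variable e : R -> R -> V4.
Hypotheses (He : smoothV D e) (He_unit : unit_field D e).

Lemma dot_Pu_unit (u v : R) : D u v -> dot (Pu e u v) (e u v) = 0.
Proof.
  intros H; pose proof (pu_dot_const D e e 1 u v HD He He He_unit H) as Hd.
  rewrite (dot_comm (e u v)) in Hd; lra.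
Qed.

Lemma dot_Pv_unit (u v : R) : D u v -> dot (Pv e u v) (e u v) = 0.
Proof.
  intros H; pose proof (pv_dot_const D e e 1 u v HD He He He_unit H) as Hd.
  rewrite (dot_comm (e u v)) in Hd; lra.
Qed.

End UnitField.

Section Weingarten.

Variable e : R -> R -> V4.
Hypotheses (He : smoothV D e) (He_normal : normal_field D z e).

Lemma weingarten_uu (u v : R) : D u v -> dot (Pu e u v) (Pu z u v) = - c11 z e u v.
Proof.
  intros H; pose proof (pu_dot_const D e (Pu z) 0 u v HD He (smoothV_Pu D z Hz)
    (fun x y h => proj1 (He_normal x y h)) H) as Hd.
  unfold c11; rewrite (dot_comm (e u v)) in Hd; lra.
Qed.

Lemma weingarten_uv (u v : R) : D u v -> dot (Pu e u v) (Pv z u v) = - c12 z e u v.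
Proof.
  intros H; pose proof (pu_dot_const D e (Pv z) 0 u v HD He (smoothV_Pv D z Hz)
    (fun x y h => proj2 (He_normal x y h)) H) as Hd.
  unfold c12; rewrite (dot_comm (e u v)), (dot_Pu_Pv_comm D z) in Hd by assumption; lra.
Qed.

Lemma weingarten_vu (u v : R) : D u v -> dot (Pv e u v) (Pu z u v) = - c12 z e u v.
Proof.
  intros H; pose proof (pv_dot_const D e (Pu z) 0 u v HD He (smoothV_Pu D z Hz)
    (fun x y h => proj1 (He_normal x y h)) H) as Hd.
  unfold c12; rewrite (dot_comm (e u v)) in Hd; lra.
Qed.

Lemma weingarten_vv (u v : R) : D u v -> dot (Pv e u v) (Pv z u v) = - c22 z e u v.
Proof.
  intros H; pose proof (pv_dot_const D e (Pv z) 0 u v HD He (smoothV_Pv D z Hz)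
    (fun x y h => proj2 (He_normal x y h)) H) as Hd.
  unfold c22; rewrite (dot_comm (e u v)) in Hd; lra.
Qed.

End Weingarten.

Section NormalFrame.

Variables e1 e2 : R -> R -> V4.
Hypotheses (He1 : smoothV D e1) (He2 : smoothV D e2)
  (Hreg : regular D z) (Hframe : normal_frame D z e1 e2).

Let e1_unit : unit_field D e1.
Proof. intros x y h; apply (Hframe x y h). Qed.
Let e2_unit : unit_field D e2.
Proof. intros x y h; apply (Hframe x y h). Qed.
Let e1_normal : normal_field D z e1.
Proof. intros x y h; destruct (Hframe x y h) as (_ & _ & _ & ? & ? & _); auto. Qed.
Let e2_normal : normal_field D z e2.
Proof. intros x y h; destruct (Hframe x y h) as (_ & _ & _ & _ & _ & ? & ? & _); auto. Qed.

Lemma normal_curvature_eq (u v : R) : D u v ->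
  pu (omega_v e1 e2) u v - pv (omega_u e1 e2) u v =
  dot (Pv e1 u v) (Pu e2 u v) - dot (Pu e1 u v) (Pv e2 u v).
Proof.
  intros H; unfold omega_v, omega_u.
  rewrite (pu_dot D (Pv e1) e2), (pv_dot D (Pu e1) e2), (dot_Pu_Pv_comm D e1)
    by auto using smoothV_Pu, smoothV_Pv.
  ring.
Qed.

Lemma ricci_equation (u v : R) : D u v ->
  pu (omega_v e1 e2) u v - pv (omega_u e1 e2) u v =
  - (EE z u v * NN z e1 e2 u v + GG z u v * LL z e1 e2 u v
     - 2 * FF z u v * MM z e1 e2 u v) / (2 * WW z u v).
Proof.
  intros H.
  assert (Hgram := Hreg u v H).
  assert (Hadapted : adapted_frame (Pu z u v) (Pv z u v) (e1 u v) (e2 u v))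
    by exact (Hframe u v H).
  rewrite normal_curvature_eq by exact H.
  unfold EE, FF, GG in Hgram.
  assert (Hgram0 := Rgt_not_eq _ _ Hgram).
  rewrite (adapted_frame_dot _ _ _ _ (Pv e1 u v) (Pu e2 u v) Hadapted Hgram0),
    (adapted_frame_dot _ _ _ _ (Pu e1 u v) (Pv e2 u v) Hadapted Hgram0).
  rewrite !(dot_Pu_unit e1), !(dot_Pv_unit e1), !(dot_Pu_unit e2), !(dot_Pv_unit e2)
    by assumption.
  rewrite !(weingarten_uu e1), !(weingarten_uv e1), !(weingarten_vu e1),
    !(weingarten_vv e1), !(weingarten_uu e2), !(weingarten_uv e2),
    !(weingarten_vu e2), !(weingarten_vv e2) by assumption.
  unfold LL, MM, NN, WW, EE, FF, GG.
  assert (HW := sqrt_sqrt _ (Rlt_le _ _ Hgram)).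
  assert (HW0 := sqrt_lt_R0 _ Hgram).
  set (W := sqrt _) in *.
  replace (dot (Pu z u v) (Pu z u v) * dot (Pv z u v) (Pv z u v)
           - dot (Pu z u v) (Pv z u v) ^ 2) with (W * W) by (rewrite HW; ring).
  field; lra.
Qed.

Hypothesis Hnoflat : free_of_flat_points D z e1 e2.

Lemma normal_curvature_eq0_iff (u v : R) : D u v ->
  pu (omega_v e1 e2) u v - pv (omega_u e1 e2) u v = 0 <->
  indicatrix_rectangular_hyperbola z e1 e2 u v.
Proof.
  intros H.
  assert (Hgram := Hreg u v H).
  assert (HW : 0 < WW z u v) by exact (sqrt_lt_R0 _ Hgram).
  assert (HE : 0 < EE z u v).
  { pose proof (dot_self_nonneg (Pu z u v)); pose proof (dot_self_nonneg (Pv z u v)).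
    unfold EE, GG in *; nra. }
  unfold indicatrix_rectangular_hyperbola, principal_normal_curvatures; cbv zeta.
  rewrite quadratic_opposite_roots, ricci_equation by assumption.
  split.
  - intros Hcurv.
    assert (Htr : EE z u v * NN z e1 e2 u v + GG z u v * LL z e1 e2 u v
                  - 2 * FF z u v * MM z e1 e2 u v = 0).
    { set (T := _ - _) in Hcurv |- *.
      replace T with (- (- T / (2 * WW z u v)) * (2 * WW z u v)) by (field; lra).
      rewrite Hcurv; ring. }
    split; [exact Htr | exact (trace_zero_det_neg _ _ _ _ _ _ HE Hgram (Hnoflat u v H) Htr)].
  - intros [Htr _]; rewrite Htr; field; lra.
Qed.

End NormalFrame.

End Surface.

Theorem proposition3p4 (D : R -> R -> Prop) (z e1 e2 : R -> R -> V4)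
  (HD : open_dom D)
  (Hz : smoothV D z) (He1 : smoothV D e1) (He2 : smoothV D e2)
  (Hreg : regular D z)
  (Hframe : normal_frame D z e1 e2)
  (Hnoflat : free_of_flat_points D z e1 e2) :
  flat_normal_connection D e1 e2 <->
  (forall u v : R, D u v -> indicatrix_rectangular_hyperbola z e1 e2 u v).
Proof.
  split; intros Hflat u v H.
  - apply (normal_curvature_eq0_iff D z HD Hz e1 e2); auto.
  - apply (normal_curvature_eq0_iff D z HD Hz e1 e2); auto.
Qed.
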